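(* Let $(V,E)$ be a finite graph and $p\in[0,1]$. Define rates on $\{0,1\}^E\times\{-1,1\}^V$ as follows: if there exists $x\in V$ such that $\sigma'=\sigma^x$ and $\eta'(e)=\eta(e)$ for all $e\in E\setminus E_x$, then $$c((\eta,\sigma),(\eta',\sigma'))=(1-p)^{|\{e\in E_x:\eta'(e)=0\}|}\,p^{|\{e\in E_x:\eta'(e)=1\}|}\,\mathbf 1_{(\eta',\sigma')\in\mathcal C_x};$$ otherwise, for $(\eta,\sigma)\neq(\eta',\sigma')$, the rate is $0$; and $c((\eta,\sigma),(\eta,\sigma))=-\sum_{(\eta',\sigma')\ne(\eta,\sigma)}c((\eta,\sigma),(\eta',\sigma'))$. Then these rates satisfy the detailed balance equation $IP(\eta,\sigma)c((\eta,\sigma),(\eta',\sigma'))=IP(\eta',\sigma')c((\eta',\sigma'),(\eta,\sigma))$ for all pairs of states.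
   Context: Edge configurations $\eta\in\{0,1\}^E$, spin configurations $\sigma\in\{-1,1\}^V$. For $e=\langle x,y\rangle$, $\delta_\sigma(e)=\mathbf 1_{\sigma(x)=\sigma(y)}$. $IP(\eta,\sigma)=\frac1Z\prod_{e\in E}\big(p\mathbf 1_{\eta(e)=1}\delta_\sigma(e)+(1-p)\mathbf 1_{\eta(e)=0}\big)$ with $Z$ the normalizing constant. $E_x$ is the set of edges with endvertex $x$; $\sigma^x$ is $\sigma$ with the spin at $x$ flipped. $\mathcal C_x=\{(\eta,\sigma):\eta(e)\le\delta_\sigma(e)\text{ for all }e\in E_x\}$. *)

From HB Require Import structures.
From mathcomp Require Import all_boot all_order all_algebra.
Set Implicit Arguments. Unset Strict Implicit. Unset Printing Implicit Defensive.
Import Order.TTheory GRing.Theory Num.Theory.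
Local Open Scope ring_scope.

(* Edge configurations: eta : {ffun E -> bool} (true = 1, false = 0).
   Spin configurations: sigma : {ffun V -> bool} (true = +1, false = -1). *)

Section Model.
Variables (V E : finType) (ep1 ep2 : E -> V).

Definition econf := {ffun E -> bool}.
Definition sconf := {ffun V -> bool}.
Definition state := (econf * sconf)%type.

Definition delta (sigma : sconf) (e : E) : bool := sigma (ep1 e) == sigma (ep2 e).

Definition Ex (x : V) : {set E} := [set e | (ep1 e == x) || (ep2 e == x)].

Definition flip (sigma : sconf) (x : V) : sconf :=
  [ffun y => if y == x then ~~ sigma y else sigma y].

Definition inC (x : V) (s : state) : bool :=
  [forall e in Ex x, s.1 e ==> delta s.2 e].

Variables (R : realFieldType) (p : R).

Definition weight (s : state) : R :=
  \prod_(e : E) (p * (s.1 e)%:R * (delta s.2 e)%:R + (1 - p) * (~~ s.1 e)%:R).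

Definition Zc : R := \sum_(s : state) weight s.

Definition IP (s : state) : R := weight s / Zc.

Definition move_at (s s' : state) (x : V) : bool :=
  (s'.2 == flip s.2 x) && [forall e, (e \notin Ex x) ==> (s'.1 e == s.1 e)].

Definition rate_off (s s' : state) : R :=
  match [pick x | move_at s s' x] with
  | Some x =>
      (1 - p) ^+ #|[set e in Ex x | ~~ s'.1 e]| * p ^+ #|[set e in Ex x | s'.1 e]|
      * (inC x s')%:R
  | None => 0
  end.

Definition rate (s s' : state) : R :=
  if s == s' then - \sum_(s'' : state | s'' != s) rate_off s s'' else rate_off s s'.

End Model.

From mathcomp Require Import all_boot all_order all_algebra.
From mathcomp Require Import ring.
Import Order.TTheory GRing.Theory Num.Theory.
Set Implicit Arguments. Unset Strict Implicit. Unset Printing Implicit Defensive.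
Local Open Scope ring_scope.

(* A flip at x only changes the edges of E_x, so the weight of a state factors
   as (product over E_x) * (product off E_x), and the second factor is the same
   for the two states of a move at x.  The product over E_x is exactly the rate
   of jumping INTO the state: it vanishes outside C_x, and on C_x each open edge
   contributes p and each closed edge 1 - p.  Hence both sides of the detailed
   balance equation equal (product off E_x) * (rate into s) * (rate into s').
   The argument is purely algebraic: no bound on p is needed. *)

Section DetailedBalance.
Variables (V E : finType) (ep1 ep2 : E -> V) (R : realFieldType) (p : R).

Local Notation state := (state V E).
Local Notation Ex := (Ex ep1 ep2).
Local Notation move_at := (move_at ep1 ep2).
Local Notation inC := (inC ep1 ep2).

Lemma flipK (sg : sconf V) x : flip (flip sg x) x = sg.
Proof. by apply/ffunP => y; rewrite !ffunE; case: eqP => [->|]; rewrite ?negbK. Qed.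

Lemma flip_inj (sg : sconf V) x y : flip sg x = flip sg y -> x = y.
Proof.
move/(congr1 (fun f : sconf V => f x)); rewrite !ffunE eqxx.
by case: eqP => // _; case: (sg x).
Qed.

Lemma delta_flip_notin (sg : sconf V) x e :
  e \notin Ex x -> delta ep1 ep2 (flip sg x) e = delta ep1 ep2 sg e.
Proof.
rewrite inE negb_or => /andP [/negbTE ep1_neq /negbTE ep2_neq].
by rewrite /delta !ffunE ep1_neq ep2_neq.
Qed.

Lemma move_at_sym s s' x : move_at s s' x -> move_at s' s x.
Proof.
case/andP => /eqP flip_s /forallP off_Ex; apply/andP; split; first by rewrite flip_s flipK.
by apply/forallP => e; apply/implyP => /(implyP (off_Ex e)); rewrite eq_sym.
Qed.

Lemma move_at_uniq s s' x y : move_at s s' x -> move_at s s' y -> x = y.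
Proof. by case/andP => /eqP sx _ /andP [/eqP sy _]; apply: (@flip_inj s.2); rewrite -sx -sy. Qed.

Definition edge_weight (t : state) (e : E) : R :=
  p * (t.1 e)%:R * (delta ep1 ep2 t.2 e)%:R + (1 - p) * (~~ t.1 e)%:R.

Definition rate_into (x : V) (t : state) : R :=
  (1 - p) ^+ #|[set e in Ex x | ~~ t.1 e]| * p ^+ #|[set e in Ex x | t.1 e]|
  * (inC x t)%:R.

Lemma weight_split_Ex x t : weight ep1 ep2 p t =
  (\prod_(e in Ex x) edge_weight t e) * \prod_(e | e \notin Ex x) edge_weight t e.
Proof. exact: bigID. Qed.

Lemma prod_Ex_edge_weight x t : \prod_(e in Ex x) edge_weight t e = rate_into x t.
Proof.
have [inCt | ninCt] := boolP (inC x t); last first.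
  rewrite /rate_into (negbTE ninCt) mulr0.
  case/forallPn: ninCt => e; rewrite negb_imply => /andP [eEx].
  rewrite negb_imply => /andP [e_open /negbTE ndelta].
  by rewrite (bigD1 e) //= {1}/edge_weight e_open ndelta /=; ring.
rewrite /rate_into inCt mulr1 (bigID (fun e => t.1 e)) mulrC /=.
rewrite -!prodr_const; congr (_ * _); apply: eq_big => e; rewrite ?inE //.
- case/andP => eEx e_open; have := forallP inCt e.
  by rewrite inE eEx /edge_weight e_open /= => -> /=; ring.
- by case/andP => _ /negbTE e_closed; rewrite /edge_weight e_closed /=; ring.
Qed.

Lemma prod_notin_Ex_move s s' x : move_at s s' x ->
  \prod_(e | e \notin Ex x) edge_weight s' e = \prod_(e | e \notin Ex x) edge_weight s e.
Proof.
case/andP => /eqP flip_s /forallP off_Ex; apply: eq_bigr => e eEx.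
have /eqP same := implyP (off_Ex e) eEx.
by rewrite /edge_weight same flip_s delta_flip_notin.
Qed.

Lemma weight_rate_into_sym s s' x : move_at s s' x ->
  weight ep1 ep2 p s * rate_into x s' = weight ep1 ep2 p s' * rate_into x s.
Proof.
move=> mv; rewrite !(weight_split_Ex x) !prod_Ex_edge_weight (prod_notin_Ex_move mv); ring.
Qed.

Lemma rate_off_move s s' x : move_at s s' x -> rate_off ep1 ep2 p s s' = rate_into x s'.
Proof.
by move=> mv; rewrite /rate_off; case: pickP => [y /(move_at_uniq mv) -> // | /(_ x)]; rewrite mv.
Qed.

Lemma rate_off_no_move s s' :
  (forall x, ~~ move_at s s' x) -> rate_off ep1 ep2 p s s' = 0.
Proof. by move=> nmv; rewrite /rate_off; case: pickP => // x; rewrite (negbTE (nmv x)). Qed.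

Lemma weight_rate_off_sym s s' :
  weight ep1 ep2 p s * rate_off ep1 ep2 p s s' =
  weight ep1 ep2 p s' * rate_off ep1 ep2 p s' s.
Proof.
have [/existsP [x mv] | /existsPn nmv] := boolP [exists x, move_at s s' x].
  rewrite (rate_off_move mv) (rate_off_move (move_at_sym mv)).
  exact: weight_rate_into_sym.
have nmv' x : ~~ move_at s' s x by apply: contra (nmv x); apply: move_at_sym.
by rewrite !rate_off_no_move ?mulr0.
Qed.

End DetailedBalance.

Theorem proposition4 (V E : finType) (ep1 ep2 : E -> V) (R : realFieldType) (p : R)
  (hp0 : 0 <= p) (hp1 : p <= 1) :
  forall s s' : state V E,
    IP ep1 ep2 p s * rate ep1 ep2 p s s' = IP ep1 ep2 p s' * rate ep1 ep2 p s' s.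
Proof.
move=> s s'; rewrite /rate eq_sym; case: eqP => [-> // | _].
by rewrite /IP mulrAC [RHS]mulrAC weight_rate_off_sym.
Qed.
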